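(* Let $T$ be an interval exchange transformation over the ordered alphabet $\mathcal{A}=\{a_1<\dots<a_k\}$ whose permutation is the symmetric permutation $\pi(a_i)=a_{k-i+1}$. Then every return word in the language of $T$ is perfectly clustering; i.e., for every $w\in\mathcal{L}(T)$ and every $u\in\mathcal{R}(w)$, $\mathrm{bwt}_{\mathcal{A}}(u)=a_k^{|u|_{a_k}}a_{k-1}^{|u|_{a_{k-1}}}\cdots a_1^{|u|_{a_1}}$.
   Context: A $k$-IET $T$ on $I=[\ell,r)$ over $\mathcal{A}$ is given by a partition of $I$ into left-closed right-open intervals $(I_a)_{a\in\mathcal{A}}$ of positive length ordered left to right by the order of $\mathcal{A}$ and a permutation $\pi$ of $\mathcal{A}$; $T(x)=x+\tau_a$ on $I_a$ with $\tau_a=\sum_{b:\,\pi^{-1}(b)<\pi^{-1}(a)}|I_b|-\sum_{b<a}|I_b|$. No minimality or regularity is assumed. Trajectories $\Omega_T(x)=w_0w_1\cdots$ with $w_i=a$ iff $T^i(x)\in I_a$; $\mathcal{L}(T)$ is the set of finite factors of all trajectories. Return words: $\mathcal{R}(w)=\{u\in\mathcal{A}^*: uw\in(\mathcal{L}(T)\cap w\mathcal{A}^* )\setminus\mathcal{A}^+w\mathcal{A}^+\}$. For a word $v$ of length $n$, $\mathrm{bwt}_{\mathcal{A}}(v)$ is the word of last letters of the $n$ cyclic rotations of $v$ sorted lexicographically w.r.t. the order of $\mathcal{A}$. A word is perfectly clustering if it is $\pi$-clustering for the symmetric permutation, i.e. its Burrows–Wheeler transform has the displayed form. *)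

From HB Require Import structures.
From mathcomp Require Import all_boot all_order all_algebra fingroup perm.
From mathcomp Require Import reals.
Set Implicit Arguments. Unset Strict Implicit. Unset Printing Implicit Defensive.
Import Order.TTheory GRing.Theory Num.Theory.
Local Open Scope ring_scope.

(* Alphabet A = 'I_k = {a_1 < ... < a_k} (a_i is the ordinal i-1), ordered by
   the natural order of ordinals.  An IET is given by a left endpoint l, the
   lengths len a > 0 of the intervals I_a, and a permutation pi of the
   alphabet; I = [l, l + sum_a len a). *)

Section IET.
Variables (R : realType) (k : nat) (pi : {perm 'I_k}) (l : R) (len : 'I_k -> R).

Definition iet_start (a : 'I_k) : R := l + \sum_(b < k | (b < a)%N) len b.

Definition iet_in (a : 'I_k) (x : R) : bool :=
  (iet_start a <= x) && (x < iet_start a + len a).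

Definition iet_dom (x : R) : bool := (l <= x) && (x < l + \sum_(b < k) len b).

Definition iet_tau (a : 'I_k) : R :=
  \sum_(b < k | ((pi^-1)%g b < (pi^-1)%g a)%N) len b - \sum_(b < k | (b < a)%N) len b.

(* T x = x + tau_a for x \in I_a (the I_a are disjoint); identity outside I *)
Definition iet_map (x : R) : R :=
  x + \sum_(a < k) (if iet_in a x then iet_tau a else 0).

(* w is a factor of the trajectory Omega_T(x) = w_0 w_1 ... (w_i = a iff
   T^i(x) \in I_a):  w = w_n ... w_{n+|w|-1} for some n *)
Definition iet_factor_of (x : R) (w : seq 'I_k) : Prop :=
  exists n : nat, forall (i : nat) (a : 'I_k), onth w i = Some a ->
    iet_in a (iter (n + i) iet_map x).

Definition iet_lang (w : seq 'I_k) : Prop :=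
  exists x : R, iet_dom x /\ iet_factor_of x w.

(* R(w) = { u | uw \in (L(T) \cap wA^* ) \ A^+ w A^+ } *)
Definition iet_return (w u : seq 'I_k) : Prop :=
  iet_lang (u ++ w) /\ prefix w (u ++ w) /\
  ~ (exists p s : seq 'I_k, (0 < size p)%N /\ (0 < size s)%N /\ u ++ w = p ++ w ++ s).
End IET.

Definition sym_perm (k : nat) : {perm 'I_k} := perm (@rev_ord_inj k).

Fixpoint lexle (k : nat) (s t : seq 'I_k) : bool :=
  match s, t with
  | [::], _ => true
  | _ :: _, [::] => false
  | a :: s', b :: t' => (a < b)%N || ((a == b) && lexle s' t')
  end.

Definition bwt (k : nat) (v : seq 'I_k) : seq 'I_k :=
  flatten [seq drop (size s).-1 s | s <- sort (@lexle k) [seq rot i v | i <- iota 0 (size v)]].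

Definition perfectly_clustering (k : nat) (u : seq 'I_k) : Prop :=
  bwt u = flatten [seq nseq (count_mem a u) a | a <- rev (enum 'I_k)].

From HB Require Import structures.
From mathcomp Require Import all_boot all_order all_algebra fingroup perm.
From mathcomp Require Import reals.
From mathcomp Require Import zify lra.
Import Order.TTheory GRing.Theory Num.Theory.

Set Implicit Arguments.
Unset Strict Implicit.
Unset Printing Implicit Defensive.

(* For the symmetric permutation, T sends I_b entirely to the left of I_a whenever
   a < b, and T is increasing on each I_c.  Comparing the codings of two points
   letter by letter, the first difference therefore respects the order of the
   points, so along a trajectory the coding after an occurrence of b is
   lexicographically below the coding after an occurrence of a (at equal
   lengths).  If u is a return word of w, then u w is such a coding, it has
   period |u|, and its factors starting inside u agree with the corresponding
   rotations of u long enough to decide their lexicographic order: otherwise w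
   would occur strictly inside u w.  So a rotation of u with a larger last letter
   is lexicographically smaller, which says exactly that the Burrows-Wheeler
   transform of u lists its letters in decreasing order. *)

Lemma flatten_drop_last (T : Type) (x0 : T) (S : seq (seq T)) :
  all (fun s => 0 < size s) S ->
  flatten [seq drop (size s).-1 s | s <- S] = [seq last x0 s | s <- S].
Proof.
elim: S => //= s S IH /andP[+ /IH->]; case/lastP: s => //= s c _.
by rewrite size_rcons /= -cats1 drop_size_cat // last_cat.
Qed.

Lemma sorted_flatten_nseq (T : eqType) (leT : rel T) (f : T -> nat) (s : seq T) :
  reflexive leT -> transitive leT -> sorted leT s ->
  sorted leT (flatten [seq nseq (f a) a | a <- s]).
Proof.
move=> refl tr; rewrite !sorted_pairwise //.
elim: s => //= a s IH /andP[leas /IH ps]; rewrite pairwise_cat ps andbT.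
apply/andP; split.
  apply/allrelP => _ _ /nseqP[-> _] /flattenP[_ /mapP[b bs ->] /nseqP[-> _]].
  exact: (allP leas).
by elim: (f a) => //= n ->; rewrite andbT; apply/allP => _ /nseqP[-> _].
Qed.

Lemma onth_nth_lt (T : Type) (x0 : T) (s : seq T) i :
  i < size s -> onth s i = Some (nth x0 s i).
Proof. by move=> si; rewrite onthE (nth_map x0). Qed.

Lemma dropl_cat (T : Type) n (u w : seq T) :
  n <= size u -> drop n (u ++ w) = drop n u ++ w.
Proof. by move=> nu; rewrite -{1}(cat_take_drop n u) -catA drop_size_cat // size_takel. Qed.

Section Lexicographic.
Variable k : nat.
Implicit Types s t : seq 'I_k.

Lemma lexle_refl s : lexle s s.
Proof. by elim: s => //= a s ->; rewrite eqxx orbT. Qed.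

Lemma lexle_total s t : lexle s t || lexle t s.
Proof.
elim: s t => [|a s IH] [|b t] //=.
by rewrite -!val_eqE /=; case: ltngtP => //= _; rewrite IH.
Qed.

Lemma lexle_anti s t : lexle s t -> lexle t s -> s = t.
Proof.
elim: s t => [|a s IH] [|b t] //=.
rewrite -!val_eqE /=; case: ltngtP => //= /val_inj-> ts st.
by rewrite (IH t).
Qed.

Lemma lexle_take m s t :
  lexle (take m s) (take m t) -> take m s != take m t -> lexle s t.
Proof.
elim: m s t => [|m IH] [|a s] [|b t] //=.
case/orP=> [->//|/andP[/eqP<- st]]; rewrite eqseq_cons eqxx /= => nst.
by rewrite ltnn (IH s t).
Qed.

End Lexicographic.

Section BurrowsWheeler.
Variable k : nat.
Implicit Types u : seq 'I_k.

Lemma last_rot_succ (x0 : 'I_k) u i : i < size u -> last x0 (rot i.+1 u) = nth x0 u i.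
Proof. by move=> iu; rewrite /rot (take_nth x0) // last_cat last_rcons. Qed.

Lemma perm_rotations_succ u :
  perm_eq [seq rot i u | i <- iota 0 (size u)] [seq rot i.+1 u | i <- iota 0 (size u)].
Proof.
case: (size u) (rot_size u) => [|n] rot_n //.
have -> : [seq rot i.+1 u | i <- iota 0 n.+1] = [seq rot i u | i <- iota 1 n.+1].
  by rewrite (iotaDl 1) -map_comp.
have -> : iota 1 n.+1 = rcons (iota 1 n) n.+1 by rewrite -cats1 -(iotaD 1 n 1) addn1.
by rewrite map_rcons rot_n perm_sym perm_rcons /= rot0.
Qed.

Lemma bwt_last (x0 : 'I_k) u :
  bwt u = [seq last x0 s | s <- sort (@lexle k) [seq rot i u | i <- iota 0 (size u)]].
Proof.
rewrite /bwt (flatten_drop_last x0) // all_sort.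
apply/allP => _ /mapP[i + ->].
by rewrite mem_iota add0n size_rot => /andP[_ /(leq_ltn_trans _)->].
Qed.

Lemma sorted_clustered u :
  sorted >=%O (flatten [seq nseq (count_mem a u) a | a <- rev (enum 'I_k)]).
Proof.
apply: sorted_flatten_nseq; [exact: lexx | exact: ge_trans |].
rewrite rev_sorted; apply: (sub_sorted (fun a b : 'I_k => @ltnW a b)).
by have := iota_ltn_sorted 0 k; rewrite -val_enum_ord sorted_map.
Qed.

Lemma perm_clustered u :
  perm_eq (flatten [seq nseq (count_mem a u) a | a <- rev (enum 'I_k)]) u.
Proof.
apply/allP => x _ /=; apply/eqP.
rewrite count_flatten sumnE !big_map big_rev big_enum /= (bigD1 x) //= big1 => [|a ax].
  by rewrite count_nseq /= eqxx mul1n addn0.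
by rewrite count_nseq /= (negbTE ax) mul0n.
Qed.

Lemma mem_rotations u x :
  x \in [seq rot i u | i <- iota 0 (size u)] -> exists2 i, i < size u & x = rot i.+1 u.
Proof.
by rewrite (perm_mem (perm_rotations_succ u)) => /mapP[i]; rewrite mem_iota; exists i.
Qed.

(* [rot i.+1 u] is the rotation of [u] ending with its [i]-th letter. *)
Definition rot_lex_antitone u : Prop :=
  forall i j (a b : 'I_k), onth u i = Some b -> onth u j = Some a -> a < b ->
    lexle (rot i.+1 u) (rot j.+1 u).

Lemma perfectly_clustering_rot u : rot_lex_antitone u -> perfectly_clustering u.
Proof.
case: u => [_|x0 u']; first by rewrite /perfectly_clustering /=; elim: (rev _).
set u := x0 :: u' => anti; rewrite /perfectly_clustering (bwt_last x0).
set rots := [seq rot i u | i <- iota 0 (size u)].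
apply: (sorted_eq ge_trans ge_anti); last first.
- have lasts : [seq last x0 s | s <- [seq rot i.+1 u | i <- iota 0 (size u)]] = u.
    rewrite -map_comp -[RHS](mkseq_nth x0); apply/eq_in_map => i.
    by rewrite mem_iota => /andP[_ iu] /=; rewrite last_rot_succ.
  apply: (@perm_trans _ [seq last x0 s | s <- rots]).
    by apply: perm_map; rewrite perm_sort.
  apply: (perm_trans (perm_map _ (perm_rotations_succ u))).
  by rewrite lasts perm_sym perm_clustered.
- exact: sorted_clustered.
apply: (homo_sorted_in (e := @lexle k) (P := mem rots)); last 2 first.
- by apply/allP => x; rewrite mem_sort.
- by apply: sort_sorted => s t; apply: lexle_total.
move=> _ _ /mem_rotations[i iu ->] /mem_rotations[j ju ->] ij /=.
rewrite !last_rot_succ // leNgt; apply/negP => lt_ij.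
have ji := anti _ _ _ _ (onth_nth_lt x0 ju) (onth_nth_lt x0 iu) lt_ij.
by move: lt_ij; rewrite -!last_rot_succ // (lexle_anti ij ji) ltxx.
Qed.

End BurrowsWheeler.

Section ReturnWords.
Variable T : eqType.
Implicit Types u w : seq T.

(* Both words continue [drop i u] by a prefix of [u]: [w] for [u ++ w], and
   [take i u] for the rotation. *)
Lemma take_drop_return u w i m :
  prefix w (u ++ w) -> i <= size u -> m <= size u -> i + m <= size (u ++ w) ->
  take m (drop i (u ++ w)) = take m (rot i u).
Proof.
rewrite prefixE size_cat => /eqP pre iu mu imv.
rewrite dropl_cat // /rot !take_cat size_drop; case: ltnP => // le_m; congr (_ ++ _).
by rewrite -[in LHS]pre take_takel ?takel_cat ?take_takel //; lia.
Qed.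

(* [w] ends [drop i (u ++ w)] after [drop i u], hence reappears in [drop j (u ++ w)]
   at offset [size u - i]. *)
Lemma prefix_drop_occurrence u w i j :
  0 < j < i -> i <= size u -> prefix (drop i (u ++ w)) (drop j (u ++ w)) ->
  exists p s, 0 < size p /\ 0 < size s /\ u ++ w = p ++ w ++ s.
Proof.
move=> /andP[j0 ji] iu; rewrite dropl_cat // => /prefixP[s drop_j].
have drop_q : drop (size u - i + j) (u ++ w) = w ++ s.
  by rewrite -drop_drop drop_j -catA drop_size_cat // size_drop.
have := congr1 size drop_q; rewrite size_drop !size_cat => size_s.
exists (take (size u - i + j) (u ++ w)), s.
rewrite -drop_q cat_take_drop size_takel ?size_cat; repeat split; lia.
Qed.

End ReturnWords.

Section ReturnWordRotations.
Variable k : nat.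

Definition sym_ordered (v : seq 'I_k) : Prop :=
  forall (a b : 'I_k) s t, a < b -> infix (b :: s) v -> infix (a :: t) v ->
    size s = size t -> lexle s t.

Lemma rot_lex_antitone_return (u w : seq 'I_k) :
  prefix w (u ++ w) ->
  ~ (exists p s, 0 < size p /\ 0 < size s /\ u ++ w = p ++ w ++ s) ->
  sym_ordered (u ++ w) -> rot_lex_antitone u.
Proof.
move=> pre nocc ord i j a b ub ua ab.
have iu : i < size u by rewrite -onthTE ub.
have ju : j < size u by rewrite -onthTE ua.
have sv := size_cat u w.
(* Up to length [m] both continuations stay inside [u ++ w] and are prefixes of
   the rotations; if they agree that far and [m < size u], the shorter one is a
   whole suffix of [u ++ w], hence a prefix of the other one. *)
set m := minn (size u) (size (u ++ w) - (maxn i j).+1).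
have slice l c : onth u l = Some c -> infix (c :: take m (drop l.+1 (u ++ w))) (u ++ w).
  move=> ul; have lu : l < size u by rewrite -onthTE ul.
  apply: (@infix_trans _ (drop l (u ++ w))); last exact: infix_drop.
  rewrite [drop l _](drop_nth c) ?nth_cat ?lu ?(onth_nth c _ _ _ ul) /=; last by lia.
  exact: (infix_take (c :: drop l.+1 (u ++ w)) m.+1).
have rot_take l : l <= maxn i j -> l < size u ->
    take m (drop l.+1 (u ++ w)) = take m (rot l.+1 u).
  by move=> lij lu; apply: take_drop_return => //=; rewrite /m; lia.
have lex_take : lexle (take m (rot i.+1 u)) (take m (rot j.+1 u)).
  rewrite -!rot_take ?leq_maxl ?leq_maxr //.
  apply: (ord a b _ _ ab (slice i b ub) (slice j a ua)).
  by rewrite !size_takel // size_drop /m; lia.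
have [eq_take|] := eqVneq (take m (rot i.+1 u)) (take m (rot j.+1 u)); last first.
  exact: lexle_take.
have [um|mu] := leqP (size u) (size (u ++ w) - (maxn i j).+1).
  move: eq_take; rewrite /m (minn_idPl um) !take_oversize ?size_rot // => ->.
  exact: lexle_refl.
exfalso; apply: nocc.
have m_eq : m = size (u ++ w) - (maxn i j).+1 by rewrite /m (minn_idPr (ltnW mu)).
move: eq_take; rewrite -!rot_take ?leq_maxl ?leq_maxr // m_eq.
have [ij|ji|eij] := ltngtP i j.
- rewrite [take _ (drop j.+1 _)]take_oversize ?size_drop // => eq_drop.
  by apply: (@prefix_drop_occurrence _ u w j.+1 i.+1) => //; rewrite -eq_drop prefix_take.
- rewrite [take _ (drop i.+1 _)]take_oversize ?size_drop // => eq_drop.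
  by apply: (@prefix_drop_occurrence _ u w i.+1 j.+1) => //; rewrite eq_drop prefix_take.
- by move: ua; rewrite -eij ub => -[ba]; rewrite ba ltnn in ab.
Qed.

End ReturnWordRotations.

Local Open Scope ring_scope.

Section IntervalExchange.
Variables (R : realType) (k : nat) (pi : {perm 'I_k}) (l : R) (len : 'I_k -> R).
Hypothesis len_pos : forall a, 0 < len a.
Local Notation T := (iet_map pi l len).
Local Notation I := (iet_in l len).

Lemma sum_len_subset_add (P Q : pred 'I_k) e :
  (forall c, P c -> Q c) -> Q e -> ~~ P e ->
  \sum_(c < k | P c) len c + len e <= \sum_(c < k | Q c) len c.
Proof.
move=> PQ Qe nPe; rewrite [X in _ <= X](bigID P) /= (eq_bigl P) => [|c]; last first.
  by apply/andP/idP => [[]//|Pc]; rewrite Pc PQ.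
rewrite lerD2l (bigD1 e) ?Qe //= lerDl.
by apply: sumr_ge0 => c _; apply: ltW.
Qed.

Lemma iet_start_lt (a b : 'I_k) : (a < b)%N -> iet_start l len a + len a <= iet_start l len b.
Proof.
move=> ab; rewrite /iet_start -addrA lerD2l.
by apply: sum_len_subset_add => [c /ltn_trans->| |] //=; rewrite ltnn.
Qed.

Lemma iet_in_leq (a b : 'I_k) x y : I a x -> I b y -> x <= y -> (a <= b)%N.
Proof.
move=> /andP[ax xa] /andP[yb yb'] xy; rewrite leqNgt; apply/negP => /iet_start_lt.
lra.
Qed.

Lemma iet_in_uniq (a b : 'I_k) x : I a x -> I b x -> a = b.
Proof. by move=> ax bx; apply/val_inj/anti_leq; rewrite !(iet_in_leq ax bx, iet_in_leq bx ax). Qed.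

Lemma iet_map_in (a : 'I_k) x : I a x -> T x = x + iet_tau pi len a.
Proof.
move=> ax; rewrite /iet_map (bigD1 a) //= ax big1 ?addr0 // => b ba.
by case: ifP => // bx; rewrite (iet_in_uniq bx ax) eqxx in ba.
Qed.

Lemma iet_map_lt_in (a : 'I_k) x y : I a x -> I a y -> x < y -> T x < T y.
Proof. by move=> ax ay xy; rewrite (iet_map_in ax) (iet_map_in ay) ltrD2r. Qed.

Definition itinerary x (v : seq 'I_k) : Prop :=
  forall i a, onth v i = Some a -> I a (iter i T x).

Lemma itinerary_cons x a v : itinerary x (a :: v) -> I a x /\ itinerary (T x) v.
Proof. by move=> xv; split=> [|i b vi]; [apply: (xv 0) | rewrite -iterSr; apply: (xv i.+1)]. Qed.

Lemma itinerary_catl x v1 v2 : itinerary x (v1 ++ v2) -> itinerary x v1.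
Proof. by move=> xv i a v1i; apply: xv; rewrite onth_cat -onthTE v1i. Qed.

Lemma itinerary_catr x v1 v2 : itinerary x (v1 ++ v2) -> itinerary (iter (size v1) T x) v2.
Proof. by move=> xv i a v2i; rewrite -iterD; apply: xv; rewrite onth_cat ltnNge leq_addl addnK. Qed.

Lemma itinerary_infix x v s : itinerary x v -> infix s v -> exists y, itinerary y s.
Proof.
move=> xv /infixP[p [q vE]]; rewrite vE in xv.
by exists (iter (size p) T x); apply: itinerary_catl (itinerary_catr xv).
Qed.

Lemma itinerary_lexle x y s t :
  x < y -> itinerary x s -> itinerary y t -> size s = size t -> lexle s t.
Proof.
elim: s t x y => [|a s IH] [|b t] x y //= xy.
move=> /itinerary_cons[ax xs] /itinerary_cons[yb yt] [st].
have := iet_in_leq ax yb (ltW xy); rewrite leq_eqVlt => /orP[/eqP/val_inj ab|->//].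
by subst b; rewrite ltnn eqxx (IH t (T x) (T y)) // (iet_map_lt_in ax yb).
Qed.

End IntervalExchange.

Section SymmetricIntervalExchange.
Variables (R : realType) (k : nat) (l : R) (len : 'I_k -> R).
Hypothesis len_pos : forall a, 0 < len a.
Local Notation T := (iet_map (sym_perm k) l len).
Local Notation I := (iet_in l len).

Lemma sym_perm_inv (c : 'I_k) : (sym_perm k)^-1%g c = rev_ord c.
Proof. by apply: (@perm_inj _ (sym_perm k)); rewrite permKV permE rev_ordK. Qed.

Lemma sym_start_add_tau (a : 'I_k) :
  iet_start l len a + iet_tau (sym_perm k) len a = l + \sum_(c < k | (a < c)%N) len c.
Proof.
rewrite /iet_start /iet_tau addrAC -addrA addrNK; congr (_ + _); apply: eq_bigl => c.
by rewrite !sym_perm_inv /=; have := ltn_ord c; have := ltn_ord a; lia.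
Qed.

Lemma sym_iet_map_swap (a b : 'I_k) x y : (a < b)%N -> I b x -> I a y -> T x < T y.
Proof.
move=> ab bx ay; rewrite (iet_map_in _ len_pos bx) (iet_map_in _ len_pos ay).
have := sym_start_add_tau a; have := sym_start_add_tau b.
have : \sum_(c < k | (b < c)%N) len c + len b <= \sum_(c < k | (a < c)%N) len c.
  by apply: (sum_len_subset_add len_pos) => [c /(ltn_trans ab)| |] //=; rewrite ltnn.
by move: bx ay => /andP[? ?] /andP[? ?]; lra.
Qed.

Lemma sym_ordered_itinerary x v : itinerary (sym_perm k) l len x v -> sym_ordered v.
Proof.
move=> xv a b s t ab /(itinerary_infix xv)[x' /itinerary_cons[bx xs]].
move=> /(itinerary_infix xv)[y' /itinerary_cons[ay yt]].
exact: itinerary_lexle (sym_iet_map_swap ab bx ay) xs yt.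
Qed.

End SymmetricIntervalExchange.

Theorem corollary6p7 (R : realType) (k : nat) (l : R) (len : 'I_k -> R)
    (len_pos : forall a : 'I_k, 0 < len a) :
  forall w u : seq 'I_k,
    iet_lang (sym_perm k) l len w ->
    iet_return (sym_perm k) l len w u ->
    perfectly_clustering u.
Proof.
(* [iet_lang w] is implied by [iet_return w u]. *)
move=> w u _ [[x [_ [n xv]]] [pre nocc]].
apply/perfectly_clustering_rot/(rot_lex_antitone_return pre nocc).
apply: (@sym_ordered_itinerary R k l len len_pos (iter n (iet_map (sym_perm k) l len) x)).
by move=> i a /xv; rewrite addnC iterD.
Qed.
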